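(* Let $R$ be a ring such that the set $\operatorname{Nil}(R)$ of nilpotent elements is closed under addition, or is closed under the operation $x\circ y=x+y-xy$. Then $R$ satisfies Köthe's conjecture.
   Context: Rings are associative and not necessarily unital. A ring $R$ satisfies Köthe's conjecture if every nil left ideal of $R$ is contained in a nil two-sided ideal (equivalently, the sum of two nil left ideals of $R$ is a nil left ideal). *)

(* Rings are associative but NOT necessarily unital, so we
   model a ring as an additive abelian group (zmodType) V together with a
   multiplication mul : V -> V -> V that is associative and bi-distributive. *)
From mathcomp Require Import all_boot all_algebra.
Set Implicit Arguments. Unset Strict Implicit. Unset Printing Implicit Defensive.
Import GRing.Theory.
Local Open Scope ring_scope.

Section Rng.
Variables (V : zmodType) (mul : V -> V -> V).

Definition rng_axioms : Prop :=
  [/\ (forall x y z, mul x (mul y z) = mul (mul x y) z),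
      (forall x y z, mul (x + y) z = mul x z + mul y z) &
      (forall x y z, mul x (y + z) = mul x y + mul x z)].

(* npow x n = x^(n+1) (no unit available) *)
Fixpoint npow (x : V) (n : nat) : V :=
  match n with 0 => x | S k => mul x (npow x k) end.

Definition nilpotent (x : V) : Prop := exists n, npow x n = 0.

Definition nil_set (S : V -> Prop) : Prop := forall x, S x -> nilpotent x.

Definition add_subgroup (S : V -> Prop) : Prop :=
  S 0 /\ (forall x y, S x -> S y -> S (x - y)).

Definition left_ideal (L : V -> Prop) : Prop :=
  add_subgroup L /\ (forall r x, L x -> L (mul r x)).

Definition two_sided_ideal (I : V -> Prop) : Prop :=
  add_subgroup I /\ (forall r x, I x -> I (mul r x)) /\
  (forall r x, I x -> I (mul x r)).

Definition koethe : Prop :=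
  forall L, left_ideal L -> nil_set L ->
    exists I, [/\ two_sided_ideal I, nil_set I & forall x, L x -> I x].

Definition circ (x y : V) : V := x + y - mul x y.

End Rng.

(* Let L be a nil left ideal.  The two-sided ideal generated by L is the additive span
   of L and L R, whose generators b and b r are nilpotent since (r b)^(k+1) = 0 forces
   (b r)^(k+2) = b (r b)^(k+1) r = 0.  Sums of nilpotents are handled by induction on
   the number of generators.  If Nil(R) is additively closed this is immediate.  If it
   is closed under the circle operation, write x + b = x o c with c in L (resp. in L r):
   for x^(n+1) = 0 the element c = b + x b + ... + x^n b satisfies c - x c = b. *)
From mathcomp Require Import all_boot all_algebra.
Set Implicit Arguments. Unset Strict Implicit. Unset Printing Implicit Defensive.
Import GRing.Theory.
Local Open Scope ring_scope.

Section AdditiveClosure.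
Variables (V : zmodType) (S : V -> Prop).

Inductive add_closure : V -> Prop :=
| add_closure0 : add_closure 0
| add_closureD s t : S s -> add_closure t -> add_closure (s + t).

Lemma add_closure_sub s : S s -> add_closure s.
Proof. by move=> Ss; rewrite -[s]addr0; apply: add_closureD => //; apply: add_closure0. Qed.

Lemma add_closureDr u v : add_closure u -> add_closure v -> add_closure (u + v).
Proof.
elim=> [|s t Ss _ IH] Cv; first by rewrite add0r.
by rewrite -addrA; apply: add_closureD => //; apply: IH.
Qed.

Lemma add_closure_morph (f : V -> V) :
  f 0 = 0 -> {morph f : u v / u + v} -> (forall s, S s -> S (f s)) ->
  forall u, add_closure u -> add_closure (f u).
Proof.
move=> f0 fD fS u; elim=> [|s t Ss _ IH]; first by rewrite f0; apply: add_closure0.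
by rewrite fD; apply: add_closureD => //; apply: fS.
Qed.

Lemma add_closure_subgroup :
  (forall s, S s -> S (- s)) -> add_subgroup add_closure.
Proof.
move=> SN; split=> [|u v Cu Cv]; first exact: add_closure0.
apply: add_closureDr => //; apply: (add_closure_morph (f := -%R)) => //.
- exact: oppr0.
- exact: opprD.
Qed.

End AdditiveClosure.

Section Rng.
Variables (V : zmodType) (mul : V -> V -> V).
Hypothesis rngR : rng_axioms mul.

Let mulA x y z : mul x (mul y z) = mul (mul x y) z.
Proof. by case: rngR. Qed.
Let mulDl x y z : mul (x + y) z = mul x z + mul y z.
Proof. by case: rngR. Qed.
Let mulDr x y z : mul x (y + z) = mul x y + mul x z.
Proof. by case: rngR. Qed.

Lemma mul0l y : mul 0 y = 0.
Proof. by apply: (@addrI _ (mul 0 y)); rewrite -mulDl !addr0. Qed.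

Lemma mul0r y : mul y 0 = 0.
Proof. by apply: (@addrI _ (mul y 0)); rewrite -mulDr !addr0. Qed.

Lemma mulNl x y : mul (- x) y = - mul x y.
Proof. by apply/eqP; rewrite -subr_eq0 opprK -mulDl addNr mul0l. Qed.

Lemma mulNr x y : mul x (- y) = - mul x y.
Proof. by apply/eqP; rewrite -subr_eq0 opprK -mulDr addNr mul0r. Qed.

Lemma mulBl x y z : mul (x - y) z = mul x z - mul y z.
Proof. by rewrite mulDl mulNl. Qed.

Lemma mulBr x y z : mul x (y - z) = mul x y - mul x z.
Proof. by rewrite mulDr mulNr. Qed.

Lemma npow_mulC b r k :
  npow mul (mul b r) k.+1 = mul b (mul (npow mul (mul r b) k) r).
Proof.
elim: k => [|k IH]; first by rewrite /= !mulA.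
change (mul (mul b r) (npow mul (mul b r) k.+1) =
  mul b (mul (mul (mul r b) (npow mul (mul r b) k)) r)).
by rewrite IH -!mulA.
Qed.

Lemma nilpotent_mulC r b : nilpotent mul (mul r b) -> nilpotent mul (mul b r).
Proof. by case=> n rbn0; exists n.+1; rewrite npow_mulC rbn0 mul0l mul0r. Qed.

Lemma left_ideal_opp L u : left_ideal mul L -> L u -> L (- u).
Proof. by case=> [[L0 LB] _] Lu; rewrite -sub0r; apply: LB. Qed.

Lemma left_ideal_add L u v : left_ideal mul L -> L u -> L v -> L (u + v).
Proof.
move=> idL Lu Lv; rewrite -[v]opprK; apply: idL.1.2 => //.
exact: left_ideal_opp.
Qed.

Fixpoint geom_sum (x b : V) (k : nat) : V :=
  if k is k'.+1 then b + mul x (geom_sum x b k') else b.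

Lemma geom_sumE x b k :
  geom_sum x b k - mul x (geom_sum x b k) = b - mul (npow mul x k) b.
Proof.
elim: k => [|k IH] //=.
by rewrite mulDr opprD addrACA -mulBr IH mulBr mulA addrA addrNK.
Qed.

Lemma left_ideal_geom_sum L x b k : left_ideal mul L -> L b -> L (geom_sum x b k).
Proof.
move=> idL Lb; elim: k => //= k IH.
by apply: left_ideal_add => //; apply: idL.2.
Qed.

Lemma subr_mul_onto_left_ideal L x b : left_ideal mul L -> nilpotent mul x -> L b ->
  exists2 c, L c & c - mul x c = b.
Proof.
move=> idL [n xn0] Lb; exists (geom_sum x b n); first exact: left_ideal_geom_sum.
by rewrite geom_sumE xn0 mul0l subr0.
Qed.

Definition ideal_gen (L : V -> Prop) (t : V) : Prop :=
  L t \/ exists b r, L b /\ t = mul b r.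

Section IdealGen.
Variable L : V -> Prop.
Hypothesis idL : left_ideal mul L.

Lemma ideal_genN t : ideal_gen L t -> ideal_gen L (- t).
Proof.
case=> [Lt|[b [r [Lb ->]]]]; first by left; apply: left_ideal_opp.
by right; exists (- b), r; rewrite mulNl; split => //; apply: left_ideal_opp.
Qed.

Lemma ideal_genMl r t : ideal_gen L t -> ideal_gen L (mul r t).
Proof.
case=> [Lt|[b [s [Lb ->]]]]; first by left; apply: idL.2.
by right; exists (mul r b), s; rewrite mulA; split => //; apply: idL.2.
Qed.

Lemma ideal_genMr r t : ideal_gen L t -> ideal_gen L (mul t r).
Proof.
case=> [Lt|[b [s [Lb ->]]]]; first by right; exists t, r.
by right; exists b, (mul s r); rewrite mulA.
Qed.

Lemma ideal_gen_two_sided : two_sided_ideal mul (add_closure (ideal_gen L)).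
Proof.
split; first by apply: add_closure_subgroup; apply: ideal_genN.
split=> r.
- apply: (add_closure_morph (f := mul r)); [exact: mul0r | exact: mulDr |].
  exact: ideal_genMl.
- apply: (add_closure_morph (f := mul^~ r)); [exact: mul0l | by move=> u v; rewrite mulDl |].
  exact: ideal_genMr.
Qed.

Hypothesis nilL : nil_set mul L.

Lemma ideal_gen_nil : nil_set mul (ideal_gen L).
Proof.
move=> t [Lt|[b [r [Lb ->]]]]; first exact: nilL.
by apply: nilpotent_mulC; apply: nilL; apply: idL.2.
Qed.

Lemma circ_ideal_gen x t : nilpotent mul x -> ideal_gen L t ->
  exists2 c, ideal_gen L c & x + t = circ mul x c.
Proof.
move=> Nx [Lt|[b [r [Lb ->]]]].
  have [c Lc cE] := subr_mul_onto_left_ideal idL Nx Lt.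
  by exists c; [left | rewrite /circ -addrA cE].
have [c Lc cE] := subr_mul_onto_left_ideal idL Nx Lb.
exists (mul c r); first by right; exists c, r.
by rewrite /circ -addrA mulA -mulBl cE.
Qed.

End IdealGen.

End Rng.

Theorem lemma2p3 (V : zmodType) (mul : V -> V -> V) :
  rng_axioms mul ->
  ((forall x y, nilpotent mul x -> nilpotent mul y -> nilpotent mul (x + y)) \/
   (forall x y, nilpotent mul x -> nilpotent mul y -> nilpotent mul (circ mul x y))) ->
  koethe mul.
Proof.
move=> rngR nilR L idL nilL.
have nil_gen := ideal_gen_nil rngR idL nilL.
exists (add_closure (ideal_gen mul L)); split.
- exact: ideal_gen_two_sided.
- move=> x; elim=> [|t u gt _ Nu]; first by exists 0%N.
  rewrite addrC; case: nilR => [nilD|nilC]; first by apply: nilD => //; apply: nil_gen.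
  have [c gc ->] := circ_ideal_gen rngR idL Nu gt.
  by apply: nilC => //; apply: nil_gen.
- by move=> x Lx; apply: add_closure_sub; left.
Qed.
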